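(* Let $u,v\in U^I_{\min}$. The Laurent polynomial $D^I_{uv}(\Lambda)$ has no constant term if $u\ne v$, and has constant term equal to $\big(-(p-1)!\big)^{-(\mu_I+1)}$ if $u=v$.
   Context: $p$ prime, $n\ge1$, $d\ge2$, $I\subseteq\{0,\dots,n\}$; ${\bf a}_1,\dots,{\bf a}_N\in\mathbb{N}^{n+1}$ with coordinate sums $d$, ${\bf a}_j^+=({\bf a}_j,1)\in\mathbb{N}^{n+2}$. $\mu_I$: $\lceil|I|/d\rceil=\mu_I+1$. $U^I_{\min}$: the set of $u\in\mathbb{N}^{n+2}$ with $\sum_{i=0}^nu_i=du_{n+1}$, $u_i>0$ for $i\in I$, and $u_{n+1}=\mu_I+1$. Hypothesis: $N\ge\mu_I+|U^I_{\min}|$ and for each $u\in U^I_{\min}$ there is $k_u$, $1\le k_u\le|U^I_{\min}|$, with $u={\bf a}^+_{\mu_I+k_u}+\sum_{j=1}^{\mu_I}{\bf a}_j^+$. Define $A^I_{uv}(\Lambda)=(-1)^{\mu_I+1}\sum_{\nu\in\mathbb{N}^N,\ \sum_j\nu_j{\bf a}_j^+=pu-v}\Lambda^\nu/(\nu_1!\cdots\nu_N!)$ and $$D^I_{uv}(\Lambda)=\Big(\prod_{j=1}^{\mu_I}\Lambda_j\Big)^{-(p-1)}\Lambda_{\mu_I+k_u}^{-p}\Lambda_{\mu_I+k_v}A^I_{uv}(\Lambda).$$ *)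

From HB Require Import structures.
From mathcomp Require Import all_boot all_order all_algebra.
From mathcomp Require Import mpoly.
Set Implicit Arguments. Unset Strict Implicit. Unset Printing Implicit Defensive.
Import Order.TTheory GRing.Theory Num.Theory.
Local Open Scope ring_scope.

(* Vectors in N^{n+1} are {ffun 'I_n.+1 -> nat} (coordinates 0..n);
   vectors in N^{n+2} are {ffun 'I_n.+2 -> nat} (coordinate n+1 = ord_max). *)

Definition aplus n (x : {ffun 'I_n.+1 -> nat}) : {ffun 'I_n.+2 -> nat} :=
  [ffun i => if unlift ord_max i is Some i' then x i' else 1%N].

Definition ceil_div (m d : nat) : nat := ((m + d.-1) %/ d)%N.

Definition inUmin n (d : nat) (I : {set 'I_n.+1}) (mu : nat)
    (u : {ffun 'I_n.+2 -> nat}) : bool :=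
  [&& (\sum_(i < n.+1) u (widen_ord (leqnSn n.+1) i) == d * u ord_max)%N,
      [forall i in I, (0 < u (widen_ord (leqnSn n.+1) i))%N]
    & u ord_max == mu.+1].

(* |U^I_min|: every u in U^I_min has all coordinates <= d*(mu+1), so U^I_min is
   in bijection with the finite set below. *)
Definition Umin_card n (d : nat) (I : {set 'I_n.+1}) (mu : nat) : nat :=
  #|[set w : {ffun 'I_n.+2 -> 'I_(d * mu.+1).+1} |
       inUmin d I mu [ffun i => nat_of_ord (w i)]]|.

(* Laurent polynomials over Q in Lambda_1..Lambda_N, represented as
   Lambda^(-lden) * lnum with lden a monomial exponent and lnum a polynomial.
   (Variable 'X_i, i : 'I_N, is Lambda_{i+1}.) *)
Record laurent (N : nat) := Laurent { lden : 'X_{1..N}; lnum : {mpoly rat[N]} }.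

Definition lpoly N (P : {mpoly rat[N]}) : laurent N := Laurent (@mnm0 N) P.

Definition negpart (z : int) : nat := if z < 0 then `|z|%N else 0%N.
Definition pospart (z : int) : nat := if 0 <= z then `|z|%N else 0%N.

(* Laurent monomial prod_{j=1}^N Lambda_j^(e j), e indexed as in the paper (1..N) *)
Definition lmono N (e : nat -> int) : laurent N :=
  Laurent [multinom negpart (e i.+1) | i < N]
          'X_[ [multinom pospart (e i.+1) | i < N] ].

Definition lmul N (L1 L2 : laurent N) : laurent N :=
  Laurent (mnm_add (lden L1) (lden L2)) (lnum L1 * lnum L2).

Definition lcoef N (m : 'I_N -> int) (L : laurent N) : rat :=
  if [forall i, 0 <= m i + (lden L i)%:Z]
  then (lnum L)@_[multinom absz (m i + (lden L i)%:Z)%R | i < N]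
  else 0.

Definition lconst N (L : laurent N) : rat := lcoef (fun _ => 0) L.

(* The sum over nu in N^N with sum_j nu_j a_j^+ = p u - v is finite: looking at
   the last coordinate, sum_j nu_j = p u_{n+1} - v_{n+1} <= p u_{n+1}, so every
   solution lies in the box below. *)
Definition Apoly (p n N : nat) (a : nat -> {ffun 'I_n.+1 -> nat}) (mu : nat)
    (u v : {ffun 'I_n.+2 -> nat}) : {mpoly rat[N]} :=
  ((-1) ^+ mu.+1 : rat) *:
  \sum_(nu : {ffun 'I_N -> 'I_(p * u ord_max).+1} |
          [forall i, (\sum_(j < N) (nu j : nat) * aplus (a j.+1) i)%:Z
                       == (p * u i)%:Z - (v i)%:Z])
     (((\prod_(j < N) (nu j : nat)`!)%:R : rat)^-1 *:
        'X_[ [multinom (nu j : nat) | j < N] ]).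

Definition Dlaurent (p n N : nat) (a : nat -> {ffun 'I_n.+1 -> nat}) (mu : nat)
    (k : {ffun 'I_n.+2 -> nat} -> nat) (u v : {ffun 'I_n.+2 -> nat}) : laurent N :=
  lmul (lmono N (fun j => if (1 <= j <= mu)%N then - (p.-1)%:Z else 0))
  (lmul (lmono N (fun j => if j == (mu + k u)%N then - (p%:Z) else 0))
  (lmul (lmono N (fun j => if j == (mu + k v)%N then 1 else 0))
        (lpoly (Apoly p N a mu u v)))).

(* The constant term of [Lambda^(-e) A] is the coefficient of [Lambda^e] in [A],
   here with [e = (p-1)(e_1 + ... + e_mu) + p e_(mu+k_u) - e_(mu+k_v)].
   If [u <> v] then [k_u <> k_v], because [u] is determined by [k_u]; so [e]
   has the entry [-1] at [mu+k_v] and the coefficient vanishes.  If [u = v]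
   then [e = (p-1)(e_1 + ... + e_mu + e_(mu+k_u))] and
   [sum_j e_j a_j^+ = (p-1) u = p u - u], so [A] contributes exactly
   [(-1)^(mu+1) / ((p-1)!)^(mu+1)]. *)

From HB Require Import structures.
From mathcomp Require Import all_boot all_order all_algebra.
From mathcomp Require Import mpoly zify.
Import Order.TTheory GRing.Theory Num.Theory.
Local Open Scope ring_scope.

Lemma mcoeffXM N (R : comNzRingType) (E M : 'X_{1..N}) (P : {mpoly R[N]}) :
  ('X_[E] * P)@_M = if (E <= M)%MM then P@_(M - E) else 0.
Proof.
case: ifP => [leEM | /negbT not_leEM].
  by rewrite -[in LHS](submK leEM) addmC mulrC mcoeffMX.
rewrite mcoeffM big1 // => -[k1 k2] /= /eqP defM.
rewrite mcoeffX; case: eqP => [defE | _]; last by rewrite mul0r.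
by have := lem_addr k1 k2; rewrite -defM -defE (negbTE not_leEM).
Qed.

Lemma eq_lcoef N (m1 m2 : 'I_N -> int) (L : laurent N) :
  m1 =1 m2 -> lcoef m1 L = lcoef m2 L.
Proof.
move=> eq_m; rewrite /lcoef (eq_forallb (fun i => congr1 (fun z => 0 <= z + _) (eq_m i))).
by congr (if _ then mcoeff _ _ else _); apply/mnmP => i; rewrite !mnmE eq_m.
Qed.

Lemma lcoef_lpoly N (m : 'I_N -> int) (P : {mpoly rat[N]}) :
  lcoef m (lpoly P) =
  if [forall i, 0 <= m i] then P@_[multinom `|m i|%N | i < N] else 0.
Proof.
rewrite /lcoef.
have m0E i : m i + (lden (lpoly P) i)%:Z = m i by rewrite mnmE addr0.
rewrite (eq_forallb (fun i => congr1 _ (m0E i))).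
by congr (if _ then mcoeff _ _ else _); apply/mnmP => i; rewrite !mnmE addr0.
Qed.

Lemma pospart_sub_negpart (z : int) : (pospart z)%:Z - (negpart z)%:Z = z.
Proof. by case: z => n; rewrite /pospart /negpart /= ?NegzE; lia. Qed.

Lemma lcoef_lmul_lmono N (e : nat -> int) (m : 'I_N -> int) (L : laurent N) :
  lcoef m (lmul (lmono N e) L) = lcoef (fun i => m i - e i.+1) L.
Proof.
rewrite /lcoef /lmul /lmono /=.
have shiftE i : m i + (negpart (e i.+1) + lden L i)%N%:Z
    = (m i - e i.+1 + (lden L i)%:Z) + (pospart (e i.+1))%:Z.
  by have := pospart_sub_negpart (e i.+1); lia.
case: (boolP [forall i, _ <= m i - _ + _]) => [/forallP idx_ge0 | /forallPn [i0 idx_lt0]].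
  rewrite ifT; last by apply/forallP => i; rewrite mnmDE mnmE shiftE; have := idx_ge0 i; lia.
  rewrite mcoeffXM ifT; last by apply/mnm_lepP => i; rewrite !mnmE shiftE; have := idx_ge0 i; lia.
  by congr mcoeff; apply/mnmP => i; rewrite !mnmE shiftE; have := idx_ge0 i; lia.
(* A negative entry of the shifted index is one where ['X_[pos e]] does not
   divide the monomial read off in the numerator. *)
case: ifP => // /forallP in_domain; rewrite mcoeffXM ifF //.
apply/negbTE/mnm_lepP => /(_ i0); rewrite !mnmE shiftE.
by have := in_domain i0; rewrite mnmDE mnmE shiftE; move: idx_lt0; lia.
Qed.

Lemma mcoeff_Apoly p n N (a : nat -> {ffun 'I_n.+1 -> nat}) mu
    (u v : {ffun 'I_n.+2 -> nat}) (m : 'X_{1..N}) :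
  (forall j, m j <= p * u ord_max)%N ->
  (Apoly p N a mu u v)@_m =
  if [forall i, (\sum_(j < N) m j * aplus (a j.+1) i)%:Z == (p * u i)%:Z - (v i)%:Z]
  then (-1) ^+ mu.+1 / (\prod_(j < N) (m j)`!)%:R else 0.
Proof.
move=> m_box.
pose nu0 : {ffun 'I_N -> 'I_(p * u ord_max).+1} := [ffun j => inord (m j)].
have nu0E j : nu0 j = m j :> nat by rewrite ffunE inordK // ltnS.
have mnm_nuE (nu : {ffun 'I_N -> 'I_(p * u ord_max).+1}) :
    ([multinom (nu j : nat) | j < N] == m) = (nu == nu0).
  apply/eqP/eqP => [/mnmP eq_m | ->]; last by apply/mnmP => j; rewrite mnmE nu0E.
  by apply/ffunP => j; apply: val_inj; rewrite /= nu0E -eq_m mnmE.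
rewrite /Apoly mcoeffZ raddf_sum /=.
under eq_bigr => nu _ do rewrite mcoeffZ mcoeffX mnm_nuE.
under eq_forallb => i do under eq_bigr => j _ do rewrite -nu0E.
case: ifP => [sol_nu0 | no_sol].
  rewrite (bigD1 nu0) //= eqxx mulr1 [X in _ + X]big1 ?addr0; last first.
    by move=> nu /andP[_ /negbTE->]; rewrite mulr0.
  by congr (_ / _%:R); apply: eq_bigr => j _; rewrite nu0E.
rewrite big1 ?mulr0 // => nu sol_nu.
by case: eqVneq sol_nu => [-> | _ _]; rewrite ?no_sol ?mulr0.
Qed.

Section DiagonalExponent.

Variables mu l : nat.

(* Indicator of [{1, ..., mu} U {l}], shifted to the 0-based indexing of the
   variables ['X_j = Lambda_(j+1)]. *)
Definition diag_support (j : nat) : nat := ((j < mu) + (j.+1 == l))%N.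

Hypothesis mu_lt_l : (mu < l)%N.

Lemma diag_support_le1 j : (diag_support j <= 1)%N.
Proof. by rewrite /diag_support; case: ltnP; case: eqP; lia. Qed.

Lemma sum_diag_support N (g : nat -> nat) : (l <= N)%N ->
  (\sum_(j < N) diag_support j * g j.+1 = \sum_(1 <= j < mu.+1) g j + g l)%N.
Proof.
move=> l_le_N.
rewrite (eq_bigr (fun j : 'I_N => (j < mu) * g j.+1 + (j.+1 == l) * g j.+1)%N);
  last by move=> j _; rewrite -mulnDl.
rewrite big_split /=; congr (_ + _)%N.
  rewrite big_add1 /= big_mkord (big_ord_widen N (fun j => g j.+1)); last lia.
  by rewrite [RHS]big_mkcond; apply: eq_bigr => j _; case: ltnP; rewrite ?mul0n ?mul1n.
have l_lt_N : (l.-1 < N)%N by lia.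
rewrite (bigD1 (Ordinal l_lt_N)) //= big1 ?addn0 => [|j /eqP j_neq].
  by rewrite prednK ?eqxx ?mul1n //; lia.
case: eqP => [j_eq | _] //; case: j_neq; apply: val_inj => /=; lia.
Qed.

Lemma prod_fact_diag_support N c : (l <= N)%N ->
  (\prod_(j < N) (diag_support j * c)`! = c`! ^ mu.+1)%N.
Proof.
move=> l_le_N.
rewrite (eq_bigr (fun j : 'I_N => c`! ^ (diag_support j * 1)))%N; last first.
  move=> j _; have := diag_support_le1 j.
  by case: (diag_support j) => [|[|]] // _; rewrite ?mul0n ?mul1n.
rewrite -expn_sum (@sum_diag_support N (fun=> 1%N) l_le_N).
by rewrite sum_nat_const_nat muln1 subn1 addn1.
Qed.

End DiagonalExponent.

Lemma mcoeff_Apoly_diag p n N (a : nat -> {ffun 'I_n.+1 -> nat}) mu l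
    (u : {ffun 'I_n.+2 -> nat}) :
  (0 < p)%N -> (mu < l <= N)%N ->
  (forall i, u i = aplus (a l) i + \sum_(1 <= j < mu.+1) aplus (a j) i)%N ->
  (Apoly p N a mu u u)@_[multinom diag_support mu l j * p.-1 | j < N]
    = (- ((p.-1)`!)%:R) ^- mu.+1.
Proof.
move=> p_gt0 /andP[mu_lt_l l_le_N] u_dec.
have u_max_gt0 : (0 < u ord_max)%N by rewrite u_dec ffunE unlift_none.
rewrite mcoeff_Apoly => [|j]; last first.
  by rewrite mnmE; have := diag_support_le1 mu l mu_lt_l j; nia.
rewrite ifT.
  under eq_bigr => j _ do rewrite mnmE.
  rewrite prod_fact_diag_support // natrX [in RHS]exprNn invfM.
  by congr (_ * _); rewrite -exprVn invrN1.
apply/forallP => i; apply/eqP.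
under eq_bigr => j _ do rewrite mnmE -mulnA.
rewrite (sum_diag_support mu l mu_lt_l N (fun j => p.-1 * aplus (a j) i)%N) //.
by rewrite -big_distrr -mulnDr addnC -u_dec; nia.
Qed.

Theorem lemma7p6 (p n d : nat) (I : {set 'I_n.+1}) (N : nat)
  (a : nat -> {ffun 'I_n.+1 -> nat}) (mu : nat)
  (k : {ffun 'I_n.+2 -> nat} -> nat) (u v : {ffun 'I_n.+2 -> nat}) :
  prime p -> (1 <= n)%N -> (2 <= d)%N ->
  (forall j, (1 <= j <= N)%N -> (\sum_(i < n.+1) a j i)%N = d) ->
  ceil_div #|I| d = mu.+1 ->
  (mu + Umin_card d I mu <= N)%N ->
  (forall w, inUmin d I mu w ->
     (1 <= k w <= Umin_card d I mu)%N /\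
     (forall i, w i = aplus (a (mu + k w)%N) i
                      + \sum_(1 <= j < mu.+1) aplus (a j) i)%N) ->
  inUmin d I mu u -> inUmin d I mu v ->
  lconst (Dlaurent p N a mu k u v)
  = if u == v then (- ((p.-1)`!)%:R) ^- mu.+1 else 0.
Proof.
move=> p_prime _ _ _ _ k_le_N k_Umin u_Umin v_Umin.
have [/andP[ku_gt0 ku_le] u_dec] := k_Umin u u_Umin.
have [/andP[kv_gt0 kv_le] v_dec] := k_Umin v v_Umin.
rewrite /lconst /Dlaurent !lcoef_lmul_lmono.
case: eqVneq => [<- | u_neq_v].
  rewrite (@eq_lcoef _ _ (fun i => (diag_support mu (mu + k u) i * p.-1)%N%:Z)) => [|i].
    by rewrite lcoef_lpoly ifT ?mcoeff_Apoly_diag ?prime_gt0 //; [lia | apply/forallP].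
  rewrite /diag_support /=; case: (ltnP i mu); case: eqP; have := prime_gt0 p_prime; lia.
have kv_neq_ku : k v != k u.
  apply: contra u_neq_v => /eqP kv_ku.
  by apply/eqP/ffunP => i; rewrite u_dec v_dec kv_ku.
have kv_idx : ((mu + k v).-1 < N)%N by lia.
rewrite lcoef_lpoly ifF //; apply/negbTE/forallPn; exists (Ordinal kv_idx) => /=.
rewrite prednK ?eqxx ?eqn_add2l ?(negbTE kv_neq_ku); last lia.
by case: ifP; lia.
Qed.
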